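(* For the two-state-service-rate queue described in the context, assumed positive recurrent and with $\gamma>0$, one has $$\lim_{n\to\infty}\frac{\pi_n^a}{\pi_n^b}=\eta:=\frac{1}{2\lambda}\Bigl(\sqrt{\Delta}+\gamma-\lambda+\mu_b-\mu_a\Bigr),\qquad \Delta=(\lambda-\gamma+\mu_a-\mu_b)^2+4\lambda\gamma,$$ and consequently the effective service rate $\frac{\mu_a\pi_n^a+\mu_b\pi_n^b}{\pi_n}$ converges as $n\to\infty$ to $\mu^\infty=\mu_b+\frac{\eta}{1+\eta}(\mu_a-\mu_b)$.
   Context: Two-state-service-rate queue. Fix parameters $\lambda_a,\lambda_b>0$, $\delta>0$, $\gamma\ge0$, $\mu_a,\mu_b>0$. Set $\lambda=\lambda_a+\lambda_b$, $r=\lambda/(\lambda+\delta)$, and for $n\ge1$, $p_n=\frac{\lambda_a}{\lambda}r^n$ and $\bar p_n=1-p_n$. Consider the continuous-time Markov chain on the state space $\{0\}\cup\{(n,a),(n,b):n\ge1\}$ with the following transitions: from $0$ to $(1,a)$ at rate $\lambda_a$ and to $(1,b)$ at rate $\lambda_b$; for $n\ge1$ and $c\in\{a,b\}$, from $(n,c)$ to $(n+1,c)$ at rate $\lambda$; from $(1,c)$ to $0$ at rate $\mu_c$; for $n\ge1$ and $c\in\{a,b\}$, from $(n+1,c)$ to $(n,a)$ at rate $\mu_c p_n$ and to $(n,b)$ at rate $\mu_c\bar p_n$; for $n\ge1$, from $(n,b)$ to $(n,a)$ at rate $\gamma$. When the chain is positive recurrent, $\pi$ denotes its stationary distribution and $\pi_0=\pi(0)$,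 $\pi_n^a=\pi((n,a))$, $\pi_n^b=\pi((n,b))$, $\pi_n=\pi_n^a+\pi_n^b$ for $n\ge1$. *)

From Stdlib Require Import Reals Arith.
Open Scope R_scope.

(* States of the chain: [S0] is state 0, [Sa k] is (k+1, a), [Sb k] is (k+1, b). *)
Inductive state : Type := S0 | Sa (k : nat) | Sb (k : nat).

(* enumeration of the (countable) state space: 0, (1,a), (1,b), (2,a), ... *)
Definition enum_state (m : nat) : state :=
  match m with
  | O => S0
  | S m' => if Nat.even m' then Sa (Nat.div2 m') else Sb (Nat.div2 m')
  end.

Definition p_n (la lb delta : R) (n : nat) : R :=
  let lam := la + lb in (la / lam) * (lam / (lam + delta)) ^ n.

(* transition rate q(i,j) for i <> j (and 0 on the diagonal) *)
Definition rate (la lb delta gamma mua mub : R) (i j : state) : R :=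
  let lam := la + lb in
  let p := p_n la lb delta in
  match i, j with
  | S0, Sa O => la
  | S0, Sb O => lb
  | Sa O, S0 => mua
  | Sb O, S0 => mub
  | Sa k, Sa k' =>
      if Nat.eqb k' (S k) then lam
      else if Nat.eqb k (S k') then mua * p (S k') else 0
  | Sa k, Sb k' =>
      if Nat.eqb k (S k') then mua * (1 - p (S k')) else 0
  | Sb k, Sb k' =>
      if Nat.eqb k' (S k) then lam
      else if Nat.eqb k (S k') then mub * (1 - p (S k')) else 0
  | Sb k, Sa k' =>
      if Nat.eqb k (S k') then mub * p (S k')
      else if Nat.eqb k k' then gamma else 0
  | _, _ => 0
  end.

(* pi is a stationary (probability) distribution of the CTMC with rates q:
   pi >= 0, sum pi = 1, and global balance pi Q = 0, i.e. for every state j,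
   sum_i pi(i) q(i,j) = pi(j) q(j) where q(j) = sum_k q(j,k) is the exit rate. *)
Definition stationary_dist (q : state -> state -> R) (pi : state -> R) : Prop :=
  (forall s, 0 <= pi s) /\
  infinite_sum (fun m => pi (enum_state m)) 1 /\
  (forall j, exists qj,
      infinite_sum (fun m => q j (enum_state m)) qj /\
      infinite_sum (fun m => pi (enum_state m) * q (enum_state m) j) (pi j * qj)).

From Stdlib Require Import Reals Lra Psatz Lia List Arith.
Import ListNotations.
Open Scope R_scope.

(* 1. Every state has finitely many neighbours, so the global balance
      equations (infinite series over the enumeration of the states) reduce
      to finite sums; we extract the balance equation at each state.
   2. Adding the two balance equations of a level gives the cut equation
      mu_a pi(n+1,a) + mu_b pi(n+1,b) = lambda pi_n.  With it, the balance
      equations of level n form a 2x2 linear system whose right-hand side is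
      the arrival flow from level n-1; solving it shows that all pi(n,c) are
      positive and that t_n = pi(n,a)/pi(n,b) obeys t_(n+1) = f_(p)(t_n) for an
      explicit Moebius map [ratio_map] with p = p_(n+2) -> 0.
   3. For p = 0 the map contracts [0,oo) towards its positive fixed point
      eta, and f_p - f_0 = O(p); a contraction with vanishing perturbation
      forces t_n -> eta.
   4. The effective service rate is a continuous function of t_n. *)

Definition state_index (s : state) : nat :=
  match s with S0 => 0 | Sa k => S (2 * k) | Sb k => S (S (2 * k)) end.

Lemma enum_state_index (s : state) : enum_state (state_index s) = s.
Proof.
  destruct s as [|k|k]; cbn -[Nat.mul Nat.even Nat.div2]; [reflexivity | |].
  - rewrite Nat.even_mul. cbn -[Nat.mul Nat.div2]. now rewrite Nat.div2_double.
  - rewrite Nat.even_succ, Nat.odd_mul. cbn -[Nat.mul Nat.div2].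
    now rewrite Nat.div2_succ_double.
Qed.

Lemma state_index_enum (m : nat) : state_index (enum_state m) = m.
Proof.
  destruct m as [|m]; [reflexivity|]. simpl.
  destruct (Nat.even m) eqn:E; simpl.
  - apply Nat.even_spec in E as [j ->]. rewrite Nat.div2_double. lia.
  - assert (Hodd : Nat.odd m = true) by (rewrite <- Nat.negb_even, E; reflexivity).
    apply Nat.odd_spec in Hodd as [j ->].
    replace (2 * j + 1)%nat with (S (2 * j)) by lia.
    rewrite Nat.div2_succ_double. lia.
Qed.

Definition state_eq_dec (s t : state) : {s = t} + {s <> t}.
Proof. decide equality; apply Nat.eq_dec. Defined.

Lemma Un_cv_const (c : R) : Un_cv (fun _ => c) c.
Proof.
  intros eps Heps. exists 0%nat. intros n _. unfold Rdist.
  rewrite Rminus_diag, Rabs_R0. lra.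
Qed.

Lemma infinite_sum_ext (f g : nat -> R) (l : R) :
  (forall m, f m = g m) -> infinite_sum f l -> infinite_sum g l.
Proof.
  intros E H. apply (Un_cv_ext (sum_f_R0 f)); [|exact H].
  intro n. apply sum_eq. intros m _. apply E.
Qed.

Lemma infinite_sum_plus (f g : nat -> R) (a b : R) :
  infinite_sum f a -> infinite_sum g b -> infinite_sum (fun m => f m + g m) (a + b).
Proof.
  intros Hf Hg. apply (Un_cv_ext (fun n => sum_f_R0 f n + sum_f_R0 g n)).
  - intro n. symmetry. apply sum_plus.
  - exact (CV_plus _ _ _ _ Hf Hg).
Qed.

Lemma sum_f_R0_single (i : nat) (c : R) (n : nat) :
  sum_f_R0 (fun m => if Nat.eq_dec m i then c else 0) n =
  if le_lt_dec i n then c else 0.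
Proof.
  induction n as [|n IH]; cbn [sum_f_R0].
  - destruct (Nat.eq_dec 0 i), (le_lt_dec i 0); try lia; reflexivity.
  - rewrite IH. destruct (Nat.eq_dec (S n) i), (le_lt_dec i n), (le_lt_dec i (S n));
      try lia; ring.
Qed.

Lemma infinite_sum_single (s0 : state) (c : R) :
  infinite_sum (fun m => if state_eq_dec (enum_state m) s0 then c else 0) c.
Proof.
  assert (E : forall m, (if Nat.eq_dec m (state_index s0) then c else 0) =
                        (if state_eq_dec (enum_state m) s0 then c else 0)).
  { intro m. destruct (Nat.eq_dec m _) as [->|Hm], (state_eq_dec _ s0) as [Hs|Hs];
      try reflexivity.
    - now rewrite enum_state_index in Hs.
    - now rewrite <- Hs, state_index_enum in Hm. }
  apply (infinite_sum_ext _ _ _ E).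
  intros eps Heps. exists (state_index s0). intros n Hn.
  rewrite sum_f_R0_single. destruct (le_lt_dec _ n); [|lia].
  unfold Rdist. rewrite Rminus_diag, Rabs_R0. lra.
Qed.

Fixpoint lsum (F : state -> R) (L : list state) : R :=
  match L with [] => 0 | s :: L' => F s + lsum F L' end.

Lemma lsum_ext (F G : state -> R) (L : list state) :
  (forall s, In s L -> F s = G s) -> lsum F L = lsum G L.
Proof.
  induction L as [|s L IH]; simpl; intros E; [reflexivity|].
  rewrite E, IH by auto. reflexivity.
Qed.

Lemma infinite_sum_finite_support (L : list state) (F : state -> R) :
  NoDup L -> (forall s, ~ In s L -> F s = 0) ->
  infinite_sum (fun m => F (enum_state m)) (lsum F L).
Proof.
  revert F. induction L as [|s0 L IH]; intros F ND HZ; simpl.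
  - apply (infinite_sum_ext (fun _ => 0)); [intro m; symmetry; apply HZ; auto|].
    apply (Un_cv_ext (fun _ => 0)); [|apply Un_cv_const].
    intro n. induction n as [|n IHn]; simpl; lra.
  - inversion ND as [|? ? Hs0 HL]; subst.
    set (F' := fun s => if state_eq_dec s s0 then 0 else F s).
    replace (lsum F L) with (lsum F' L).
    2:{ apply lsum_ext. intros s Hs. unfold F'.
        destruct (state_eq_dec s s0); [subst; contradiction | reflexivity]. }
    apply (infinite_sum_ext
             (fun m => (if state_eq_dec (enum_state m) s0 then F s0 else 0) + F' (enum_state m))).
    { intro m. unfold F'. destruct (state_eq_dec (enum_state m) s0) as [->|]; ring. }
    apply infinite_sum_plus; [apply infinite_sum_single|].
    apply IH; [exact HL|]. intros s Hs. unfold F'.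
    destruct (state_eq_dec s s0); [reflexivity|]. apply HZ. simpl. intuition.
Qed.

Lemma balance_finite (q : state -> state -> R) (pi : state -> R) (j : state)
  (Lin Lout : list state) :
  stationary_dist q pi -> NoDup Lin -> NoDup Lout ->
  (forall s, ~ In s Lout -> q j s = 0) ->
  (forall s, ~ In s Lin -> pi s * q s j = 0) ->
  lsum (fun s => pi s * q s j) Lin = pi j * lsum (q j) Lout.
Proof.
  intros [_ [_ Hbal]] Nin Nout Zout Zin. destruct (Hbal j) as [qj [Hout Hin]].
  rewrite (uniqueness_sum _ _ _ (infinite_sum_finite_support Lout (q j) Nout Zout) Hout).
  exact (uniqueness_sum _ _ _
           (infinite_sum_finite_support Lin (fun s => pi s * q s j) Nin Zin) Hin).
Qed.

Ltac solve_nodup :=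
  repeat constructor; simpl; intros Hin; repeat destruct Hin as [Hin|Hin];
  try discriminate; try (injection Hin; lia); auto.

Ltac case_eqb :=
  repeat match goal with |- context [Nat.eqb ?a ?b] => destruct (Nat.eqb_spec a b) end.

Ltac case_eqb_in H :=
  repeat match type of H with context [Nat.eqb ?a ?b] => destruct (Nat.eqb_spec a b) end.

Ltac solve_vanishing :=
  intros s Hs; destruct s as [|[|x]|[|x]]; unfold rate; cbn -[Nat.eqb]; case_eqb;
  try ring; exfalso; apply Hs; simpl;
  repeat (first [left; solve [reflexivity | f_equal; lia] | right]).

Ltac balance_at hpi j Lin Lout :=
  let H := fresh "Hbal" in
  pose proof (balance_finite _ _ j Lin Lout hpi ltac:(solve_nodup) ltac:(solve_nodup)
                ltac:(solve_vanishing) ltac:(solve_vanishing)) as H;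
  simpl in H; unfold rate in H; cbn -[Nat.eqb] in H; case_eqb_in H; try (exfalso; lia).

Section Balance.

Variables la lb delta gamma mua mub : R.
Variable pi : state -> R.
Hypothesis hpi : stationary_dist (rate la lb delta gamma mua mub) pi.

Local Notation p := (p_n la lb delta).

(* Arrival rates into level [k+1] from below: from state 0 at the first level,
   from the arrival of a customer at level [k] otherwise. *)
Definition arrival_a (k : nat) : R :=
  match k with O => la * pi S0 | S k' => (la + lb) * pi (Sa k') end.
Definition arrival_b (k : nat) : R :=
  match k with O => lb * pi S0 | S k' => (la + lb) * pi (Sb k') end.

Lemma balance_S0 : pi S0 * (la + lb) = mua * pi (Sa 0) + mub * pi (Sb 0).
Proof. balance_at hpi S0 [Sa 0; Sb 0] [Sa 0; Sb 0]. lra. Qed.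

Lemma balance_a (k : nat) :
  pi (Sa k) * (la + lb + mua) = arrival_a k + gamma * pi (Sb k) +
    p (S k) * (mua * pi (Sa (S k)) + mub * pi (Sb (S k))).
Proof.
  destruct k as [|[|k]]; simpl arrival_a.
  - balance_at hpi (Sa 0) [S0; Sb 0; Sa 1; Sb 1] [Sa 1; S0]. lra.
  - balance_at hpi (Sa 1) [Sa 0; Sb 1; Sa 2; Sb 2] [Sa 2; Sa 0; Sb 0]. lra.
  - balance_at hpi (Sa (S (S k))) [Sa (S k); Sb (S (S k)); Sa (S (S (S k))); Sb (S (S (S k)))]
      [Sa (S (S (S k))); Sa (S k); Sb (S k)]. lra.
Qed.

Lemma balance_b (k : nat) :
  pi (Sb k) * (la + lb + mub + gamma) = arrival_b k +
    (1 - p (S k)) * (mua * pi (Sa (S k)) + mub * pi (Sb (S k))).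
Proof.
  destruct k as [|[|k]]; simpl arrival_b.
  - balance_at hpi (Sb 0) [S0; Sa 1; Sb 1] [Sb 1; Sa 0; S0]. lra.
  - balance_at hpi (Sb 1) [Sb 0; Sa 2; Sb 2] [Sb 2; Sa 1; Sb 0; Sa 0]. lra.
  - balance_at hpi (Sb (S (S k))) [Sb (S k); Sa (S (S (S k))); Sb (S (S (S k)))]
      [Sb (S (S (S k))); Sa (S (S k)); Sb (S k); Sa (S k)]. lra.
Qed.

(* Cut equation: the service flow down from level [k+2] equals the arrival
   flow up from level [k+1]. *)
Lemma level_flow (k : nat) :
  mua * pi (Sa (S k)) + mub * pi (Sb (S k)) = (la + lb) * (pi (Sa k) + pi (Sb k)).
Proof.
  induction k as [|k IH].
  - pose proof balance_S0. pose proof (balance_a 0). pose proof (balance_b 0).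
    simpl arrival_a in *. simpl arrival_b in *. lra.
  - pose proof (balance_a (S k)). pose proof (balance_b (S k)).
    simpl arrival_a in *. simpl arrival_b in *. lra.
Qed.

End Balance.

Lemma decay_ratio_bounds (lam delta : R) : 0 < lam -> 0 < delta ->
  0 < lam / (lam + delta) < 1.
Proof.
  intros Hlam Hd. split; [apply Rdiv_lt_0_compat; lra|].
  apply Rmult_lt_reg_r with (lam + delta); [lra|].
  unfold Rdiv. rewrite Rmult_assoc, Rinv_l; lra.
Qed.

(* The routing probabilities are positive and at most la/(la+lb), so that
   (1 - p_n)(la+lb) >= lb. *)
Lemma p_n_bounds (la lb delta : R) (n : nat) : 0 < la -> 0 < lb -> 0 < delta ->
  0 < p_n la lb delta n /\ p_n la lb delta n * (la + lb) <= la.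
Proof.
  intros Hla Hlb Hd. unfold p_n.
  set (r := (la + lb) / (la + lb + delta)).
  assert (Hr : 0 < r < 1) by (apply decay_ratio_bounds; lra).
  assert (Hrn : 0 < r ^ n <= 1).
  { split; [apply pow_lt; lra | rewrite <- (pow1 n); apply pow_incr; lra]. }
  split.
  - apply Rmult_lt_0_compat; [apply Rdiv_lt_0_compat|]; lra.
  - replace (la / (la + lb) * r ^ n * (la + lb)) with (la * r ^ n) by (field; lra). nra.
Qed.

Lemma p_n_vanishes (la lb delta : R) : 0 < la -> 0 < lb -> 0 < delta ->
  Un_cv (fun k => p_n la lb delta (S (S k))) 0.
Proof.
  intros Hla Hlb Hd. unfold p_n.
  set (r := (la + lb) / (la + lb + delta)).
  assert (Hr : 0 < r < 1) by (apply decay_ratio_bounds; lra).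
  assert (Hgeom : Un_cv (fun k => r ^ k) 0).
  { intros eps Heps. destruct (pow_lt_1_zero r ltac:(rewrite Rabs_pos_eq; lra) eps Heps)
      as [N HN].
    exists N. intros n Hn. unfold Rdist. rewrite Rminus_0_r. exact (HN n Hn). }
  apply (Un_cv_ext (fun k => la / (la + lb) * r ^ 2 * r ^ k)).
  - intro k. simpl. ring.
  - rewrite <- (Rmult_0_r (la / (la + lb) * r ^ 2)).
    exact (CV_mult _ _ _ _ (Un_cv_const _) Hgeom).
Qed.

(* The map sending the level-[k] ratio [pi(k,a)/pi(k,b)] to the next one,
   when the routing probability at the next level is [p]. *)
Definition ratio_map (lam mua mub gamma p t : R) : R :=
  ((mub + gamma + p * lam) * t + (gamma + p * lam)) /
  ((1 - p) * lam * t + (mua + (1 - p) * lam)).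

(* The positive fixed point of [ratio_map] with [p = 0]: the limit eta. *)
Definition limit_ratio (lam mua mub gamma : R) : R :=
  / (2 * lam) * (sqrt ((lam - gamma + mua - mub) ^ 2 + 4 * lam * gamma)
                 + gamma - lam + mub - mua).

Lemma level_system (lam mua mub gamma p A B x y : R) :
  0 < lam -> 0 < mua -> 0 < mub -> 0 <= gamma -> 0 <= p < 1 -> 0 < A -> 0 < B ->
  x * (lam + mua) = A + gamma * y + p * lam * (x + y) ->
  y * (lam + mub + gamma) = B + (1 - p) * lam * (x + y) ->
  0 < x /\ 0 < y /\ x / y = ratio_map lam mua mub gamma p (A / B).
Proof.
  intros Hlam Hmua Hmub Hg Hp HA HB Ex Ey.
  set (det := mua * (mub + gamma + p * lam) + (1 - p) * lam * mub).
  assert (Hq : 0 < (1 - p) * lam) by (apply Rmult_lt_0_compat; lra).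
  assert (Hdet : 0 < det).
  { unfold det. assert (0 <= p * lam) by (apply Rmult_le_pos; lra).
    assert (0 < (1 - p) * lam * mub) by (apply Rmult_lt_0_compat; lra). nra. }
  assert (EA : A = x * (lam + mua) - gamma * y - p * lam * (x + y)) by lra.
  assert (EB : B = y * (lam + mub + gamma) - (1 - p) * lam * (x + y)) by lra.
  (* Cramer's rule for the level system. *)
  assert (Hx : det * x = (mub + gamma + p * lam) * A + (gamma + p * lam) * B)
    by (rewrite EA, EB; unfold det; ring).
  assert (Hy : det * y = (1 - p) * lam * A + (mua + (1 - p) * lam) * B)
    by (rewrite EA, EB; unfold det; ring).
  assert (Hxpos : 0 < det * x).
  { rewrite Hx. assert (0 <= p * lam) by (apply Rmult_le_pos; lra). nra. }
  assert (Hypos : 0 < det * y) by (rewrite Hy; nra).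
  assert (Hx0 : 0 < x) by nra.
  assert (Hy0 : 0 < y) by nra.
  split; [exact Hx0|]. split; [exact Hy0|].
  unfold ratio_map.
  replace (x / y) with ((det * x) / (det * y)) by (field; lra).
  rewrite Hx, Hy. field. split; [lra|]. nra.
Qed.

Section Levels.

Variables la lb delta gamma mua mub : R.
Hypotheses (hla : 0 < la) (hlb : 0 < lb) (hdelta : 0 < delta) (hgamma : 0 < gamma)
  (hmua : 0 < mua) (hmub : 0 < mub).
Variable pi : state -> R.
Hypothesis hpi : stationary_dist (rate la lb delta gamma mua mub) pi.

Local Notation lam := (la + lb).
Local Notation p := (p_n la lb delta).

(* If state 0 had no mass, the cut equations would propagate this to every
   level, contradicting total mass 1. *)
Lemma state0_positive : 0 < pi S0.
Proof.
  destruct hpi as [Hnn [Hsum _]].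
  destruct (Rle_lt_or_eq_dec 0 (pi S0) (Hnn S0)) as [H0|H0]; [exact H0|exfalso].
  assert (Hzero : forall a b, 0 <= a -> 0 <= b -> mua * a + mub * b = 0 -> a = 0 /\ b = 0)
    by (intros; split; nra).
  assert (Hlevels : forall k, pi (Sa k) = 0 /\ pi (Sb k) = 0).
  { induction k as [|k [IHa IHb]]; apply Hzero; try apply Hnn.
    - rewrite <- (balance_S0 _ _ _ _ _ _ _ hpi), <- H0. ring.
    - rewrite (level_flow _ _ _ _ _ _ _ hpi), IHa, IHb. ring. }
  assert (Hall : forall s, pi s = 0) by (intros [|k|k]; [auto | apply Hlevels | apply Hlevels]).
  pose proof (infinite_sum_finite_support [] pi (NoDup_nil _) (fun s _ => Hall s)) as H.
  pose proof (uniqueness_sum _ _ _ H Hsum). simpl in *. lra.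
Qed.

(* Level [k+1] in isolation: its two balance equations, once the cut
   equation is used, form the linear system of [level_system]. *)
Lemma level_solution (k : nat) :
  0 < arrival_a la lb pi k -> 0 < arrival_b la lb pi k ->
  0 < pi (Sa k) /\ 0 < pi (Sb k) /\
  pi (Sa k) / pi (Sb k) =
    ratio_map lam mua mub gamma (p (S k)) (arrival_a la lb pi k / arrival_b la lb pi k).
Proof.
  intros HA HB. destruct (p_n_bounds la lb delta (S k) hla hlb hdelta) as [Hp1 Hp2].
  pose proof (balance_a _ _ _ _ _ _ _ hpi k) as Ea.
  pose proof (balance_b _ _ _ _ _ _ _ hpi k) as Eb.
  rewrite (level_flow _ _ _ _ _ _ _ hpi) in Ea, Eb.
  apply level_system; try lra.
  split; [lra|]. apply (Rmult_lt_reg_r lam); lra.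
Qed.

Lemma levels_positive (k : nat) : 0 < pi (Sa k) /\ 0 < pi (Sb k).
Proof.
  pose proof state0_positive as H0.
  induction k as [|k [IHa IHb]].
  - destruct (level_solution 0) as [Ha [Hb _]]; simpl; [nra | nra | split; assumption].
  - destruct (level_solution (S k)) as [Ha [Hb _]]; simpl; [nra | nra | split; assumption].
Qed.

Lemma level_ratio_step (k : nat) :
  pi (Sa (S k)) / pi (Sb (S k)) =
    ratio_map lam mua mub gamma (p (S (S k))) (pi (Sa k) / pi (Sb k)).
Proof.
  destruct (levels_positive k) as [Ha Hb].
  destruct (level_solution (S k)) as [_ [_ ->]]; simpl;
    [apply Rmult_lt_0_compat; lra .. |].
  f_equal. field. lra.
Qed.

End Levels.

Lemma Un_cv_of_dist (u : nat -> R) (l : R) :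
  Un_cv (fun k => Rabs (u k - l)) 0 -> Un_cv u l.
Proof.
  intros H eps Heps. destruct (H eps Heps) as [N HN]. exists N. intros n Hn.
  specialize (HN n Hn). unfold Rdist in *. rewrite Rminus_0_r, Rabs_Rabsolu in HN. exact HN.
Qed.

Lemma contraction_to_zero (d e : nat -> R) (kap : R) :
  0 <= kap < 1 -> (forall k, 0 <= d k) ->
  (forall k, d (S k) <= kap * d k + e k) -> Un_cv e 0 -> Un_cv d 0.
Proof.
  intros Hk Hd Hrec He eps Heps.
  destruct (He (eps * (1 - kap) / 2)) as [N HN]; [nra|].
  assert (Htail : forall j, d (N + j)%nat <= kap ^ j * d N + eps / 2).
  { induction j as [|j IH].
    - rewrite Nat.add_0_r. simpl. lra.
    - rewrite Nat.add_succ_r. eapply Rle_trans; [apply Hrec|].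
      specialize (HN (N + j)%nat ltac:(lia)). unfold Rdist in HN.
      rewrite Rminus_0_r in HN. apply Rabs_def2 in HN.
      assert (kap * d (N + j)%nat <= kap * (kap ^ j * d N + eps / 2))
        by (apply Rmult_le_compat_l; lra).
      simpl. nra. }
  assert (HdN := Hd N).
  destruct (pow_lt_1_zero kap ltac:(rewrite Rabs_pos_eq; lra) (eps / 2 / (d N + 1)))
    as [M HM]; [apply Rdiv_lt_0_compat; lra|].
  exists (N + M)%nat. intros n Hn.
  replace n with (N + (n - N))%nat by lia.
  unfold Rdist. rewrite Rminus_0_r, Rabs_pos_eq by apply Hd.
  eapply Rle_lt_trans; [apply Htail|].
  specialize (HM (n - N)%nat ltac:(lia)).
  assert (Hpow : 0 <= kap ^ (n - N)) by (apply pow_le; lra).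
  rewrite Rabs_pos_eq in HM by exact Hpow.
  apply (Rmult_lt_compat_r (d N + 1)) in HM; [|lra].
  replace (eps / 2 / (d N + 1) * (d N + 1)) with (eps / 2) in HM by (field; lra).
  nra.
Qed.

Lemma limit_ratio_spec (lam mua mub gamma : R) :
  0 < lam -> 0 < mua -> 0 < mub -> 0 < gamma ->
  let eta := limit_ratio lam mua mub gamma in
  0 < eta /\ lam * eta * eta = (gamma + mub - mua - lam) * eta + gamma /\
  0 < mub + gamma - lam * eta < mua + lam.
Proof.
  intros Hlam Hmua Hmub Hg eta.
  set (u := gamma + mub - mua - lam).
  set (s := sqrt ((lam - gamma + mua - mub) ^ 2 + 4 * lam * gamma)).
  assert (Hss : s * s = u * u + 4 * lam * gamma).
  { unfold s. rewrite sqrt_sqrt; [unfold u; ring|]. assert (0 < lam * gamma) by nra. assert (0 <= (lam - gamma + mua - mub) ^ 2) by (apply pow2_ge_0). lra. }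
  assert (Hs0 : 0 <= s) by apply sqrt_pos.
  assert (H2 : 2 * lam * eta = s + u) by (unfold eta, limit_ratio; fold s; unfold u; field; lra).
  clearbody eta s.
  assert (Hlg : 0 < lam * gamma) by nra.
  assert (Hsu : u < s /\ - u < s) by (split; nra).
  assert (Heta : 0 < eta).
  { apply (Rmult_lt_reg_l (2 * lam)); lra. }
  assert (Hq : lam * eta * eta = u * eta + gamma).
  { assert (H4 : 4 * lam * (lam * eta * eta - u * eta - gamma) = 0).
    { replace (4 * lam * (lam * eta * eta - u * eta - gamma)) with
        ((2 * lam * eta) * (2 * lam * eta) - 2 * u * (2 * lam * eta) - 4 * lam * gamma) by ring.
      rewrite H2. nra. }
    apply Rmult_integral in H4 as [H4|H4]; lra. }
  repeat split; [exact Heta | exact Hq | | unfold u in *; lra].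
  set (M := mub + gamma + mua + lam).
  assert (HM : s * s < M * M).
  { rewrite Hss. unfold M, u.
    assert (lam * gamma < (mua + lam) * (mub + gamma)) by nra. nra. }
  assert (s < M).
  { destruct (Rlt_le_dec s M) as [Hlt|Hle]; [exact Hlt|].
    assert (M * M <= s * s) by (apply Rmult_le_compat; unfold M in *; lra). lra. }
  unfold M, u in *. lra.
Qed.

(* Unperturbed map: f_0(t) - eta = (t - eta) sig / (lam t + mua + lam), hence a
   contraction towards eta on [0,oo) with factor sig / (mua + lam). *)
Lemma ratio_map_contracts (lam mua mub gamma : R) :
  0 < lam -> 0 < mua -> 0 < mub -> 0 < gamma ->
  let eta := limit_ratio lam mua mub gamma in
  exists kap, 0 <= kap < 1 /\ forall t, 0 <= t ->
    Rabs (ratio_map lam mua mub gamma 0 t - eta) <= kap * Rabs (t - eta).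
Proof.
  intros Hlam Hmua Hmub Hg eta.
  destruct (limit_ratio_spec lam mua mub gamma Hlam Hmua Hmub Hg) as [Heta [Hq Hsig]].
  fold eta in Heta, Hq, Hsig.
  set (sig := mub + gamma - lam * eta) in Hsig.
  exists (sig / (mua + lam)). split.
  { split; [apply Rlt_le, Rdiv_lt_0_compat; lra|].
    apply Rmult_lt_reg_r with (mua + lam); [lra|].
    unfold Rdiv. rewrite Rmult_assoc, Rinv_l; lra. }
  intros t Ht.
  assert (HD : 0 < lam * t + mua + lam) by nra.
  assert (Hid : ratio_map lam mua mub gamma 0 t - eta = (t - eta) * (sig / (lam * t + mua + lam))).
  { unfold ratio_map, sig.
    replace ((1 - 0) * lam * t + (mua + (1 - 0) * lam)) with (lam * t + mua + lam) by ring.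
    field_simplify_eq; [lra | lra]. }
  rewrite Hid, Rabs_mult, (Rabs_pos_eq (sig / _)) by (apply Rlt_le, Rdiv_lt_0_compat; lra).
  rewrite Rmult_comm. apply Rmult_le_compat_r; [apply Rabs_pos|].
  unfold Rdiv. apply Rmult_le_compat_l; [lra|]. apply Rinv_le_contravar; nra.
Qed.

Lemma ratio_map_perturbation (lam b mua mub gamma p t : R) :
  0 < lam -> 0 < b -> 0 < mua -> 0 < mub -> 0 < gamma ->
  0 <= p -> b <= (1 - p) * lam -> 0 <= t ->
  Rabs (ratio_map lam mua mub gamma p t - ratio_map lam mua mub gamma 0 t)
    <= p * ((lam + mub + 2 * gamma) / b).
Proof.
  intros Hlam Hb Hmua Hmub Hg Hp Hpb Ht.
  set (N0 := (mub + gamma) * t + gamma).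
  set (D0 := lam * t + mua + lam).
  set (D1 := (1 - p) * lam * t + (mua + (1 - p) * lam)).
  assert (HN0 : 0 <= N0) by (unfold N0; nra).
  assert (HD0 : 0 < D0) by (unfold D0; nra).
  assert (HD1 : b * (t + 1) <= D1) by (unfold D1; nra).
  assert (HD1pos : 0 < D1).
  { assert (0 < b * (t + 1)) by (apply Rmult_lt_0_compat; lra). lra. }
  assert (Hdiff : ratio_map lam mua mub gamma p t - ratio_map lam mua mub gamma 0 t
                  = p * (lam * (N0 + D0) / D0) * ((t + 1) / D1)).
  { unfold ratio_map, N0, D0, D1 in *. field. split; lra. }
  assert (Hfirst : lam * (N0 + D0) / D0 <= lam + mub + 2 * gamma).
  { apply Rmult_le_reg_r with D0; [lra|]. unfold Rdiv. rewrite Rmult_assoc, Rinv_l by lra.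
    assert (0 <= gamma * lam * t) by (apply Rmult_le_pos; nra).
    assert (0 <= (mub + 2 * gamma) * mua) by nra.
    assert (0 <= (mub + gamma) * lam) by nra.
    unfold N0, D0. ring_simplify. lra. }
  assert (Hsecond : (t + 1) / D1 <= / b).
  { apply Rmult_le_reg_r with (b * D1); [nra|]. unfold Rdiv.
    replace ((t + 1) * / D1 * (b * D1)) with (b * (t + 1)) by (field; lra).
    replace (/ b * (b * D1)) with D1 by (field; lra). exact HD1. }
  assert (Hf0 : 0 <= lam * (N0 + D0) / D0)
    by (apply Rle_mult_inv_pos; [apply Rmult_le_pos|]; lra).
  assert (Hs0 : 0 <= (t + 1) / D1) by (apply Rle_mult_inv_pos; lra).
  rewrite Hdiff, Rabs_pos_eq by (apply Rmult_le_pos; [apply Rmult_le_pos|]; assumption).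
  replace (p * ((lam + mub + 2 * gamma) / b)) with (p * (lam + mub + 2 * gamma) * / b)
    by (unfold Rdiv; ring).
  apply Rmult_le_compat; [apply Rmult_le_pos | | apply Rmult_le_compat_l |]; assumption.
Qed.

Lemma ratio_limit (lam b mua mub gamma : R) (T P : nat -> R) :
  0 < lam -> 0 < b -> 0 < mua -> 0 < mub -> 0 < gamma ->
  (forall k, 0 <= T k) -> (forall k, 0 <= P k /\ b <= (1 - P k) * lam) -> Un_cv P 0 ->
  (forall k, T (S k) = ratio_map lam mua mub gamma (P k) (T k)) ->
  Un_cv T (limit_ratio lam mua mub gamma).
Proof.
  intros Hlam Hb Hmua Hmub Hg HT HP HPcv Hrec.
  destruct (ratio_map_contracts lam mua mub gamma Hlam Hmua Hmub Hg) as [kap [Hkap Hcontr]].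
  set (eta := limit_ratio lam mua mub gamma) in *.
  set (K := (lam + mub + 2 * gamma) / b).
  apply Un_cv_of_dist.
  apply (contraction_to_zero _ (fun k => P k * K) kap Hkap); [intro; apply Rabs_pos | |].
  - intro k. rewrite Hrec. destruct (HP k) as [Hp Hpb].
    replace (ratio_map lam mua mub gamma (P k) (T k) - eta)
      with ((ratio_map lam mua mub gamma (P k) (T k) - ratio_map lam mua mub gamma 0 (T k))
            + (ratio_map lam mua mub gamma 0 (T k) - eta)) by ring.
    eapply Rle_trans; [apply Rabs_triang|].
    pose proof (ratio_map_perturbation lam b mua mub gamma (P k) (T k)
                  Hlam Hb Hmua Hmub Hg Hp Hpb (HT k)) as Hpert.
    pose proof (Hcontr (T k) (HT k)). fold K in Hpert. lra.
  - rewrite <- (Rmult_0_l K). exact (CV_mult _ _ _ _ HPcv (Un_cv_const K)).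
Qed.

Lemma service_rate_limit (mua mub eta : R) (x y : nat -> R) :
  0 <= eta -> (forall k, 0 < x k /\ 0 < y k) -> Un_cv (fun k => x k / y k) eta ->
  Un_cv (fun k => (mua * x k + mub * y k) / (x k + y k))
        (mub + eta / (1 + eta) * (mua - mub)).
Proof.
  intros Heta Hxy Hcv.
  set (g := fun t => (mua * t + mub) / (t + 1)).
  assert (Hg : continuity_pt g eta) by (unfold g; reg; lra).
  replace (mub + eta / (1 + eta) * (mua - mub)) with (g eta) by (unfold g; field; lra).
  apply Un_cv_ext with (fun k => g (x k / y k)).
  - intro k. destruct (Hxy k). unfold g. field. lra.
  - exact (continuity_seq g _ eta Hg Hcv).
Qed.

Theorem mainTheorem7 (la lb delta gamma mua mub : R)
  (hla : 0 < la) (hlb : 0 < lb) (hdelta : 0 < delta) (hgamma : 0 < gamma)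
  (hmua : 0 < mua) (hmub : 0 < mub)
  (pi : state -> R)
  (hpi : stationary_dist (rate la lb delta gamma mua mub) pi) :
  let lam := la + lb in
  let Delta := (lam - gamma + mua - mub) ^ 2 + 4 * lam * gamma in
  let eta := / (2 * lam) * (sqrt Delta + gamma - lam + mub - mua) in
  Un_cv (fun k => pi (Sa k) / pi (Sb k)) eta /\
  Un_cv (fun k => (mua * pi (Sa k) + mub * pi (Sb k)) / (pi (Sa k) + pi (Sb k)))
        (mub + eta / (1 + eta) * (mua - mub)).
Proof.
  intros lam Delta eta.
  pose proof (levels_positive la lb delta gamma mua mub hla hlb hdelta hgamma hmua hmub pi hpi)
    as Hpos.
  assert (Hratio : Un_cv (fun k => pi (Sa k) / pi (Sb k)) eta).
  { apply (ratio_limit lam lb mua mub gamma _ (fun k => p_n la lb delta (S (S k))));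
      try (unfold lam; lra).
    - intro k. destruct (Hpos k). left. apply Rdiv_lt_0_compat; lra.
    - intro k. destruct (p_n_bounds la lb delta (S (S k)) hla hlb hdelta). unfold lam. lra.
    - exact (p_n_vanishes la lb delta hla hlb hdelta).
    - exact (level_ratio_step la lb delta gamma mua mub hla hlb hdelta hgamma hmua hmub pi hpi). }
  split; [exact Hratio|].
  apply service_rate_limit; [| exact Hpos | exact Hratio].
  destruct (limit_ratio_spec lam mua mub gamma) as [Heta _]; try (unfold lam; lra).
  apply Rlt_le. exact Heta.
Qed.
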